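(* Let $S_1,\ldots,S_k$ be measurable subsets of $[0,\infty)$ with positive Lebesgue measure, ordered in the sense that for any $x\in S_i$ and $y\in S_j$ with $i<j$, $x<y$ holds almost surely. Let $w$ be a measurable function that does not change its sign inside each $S_j$, and assume $\int_{S_j}w(x)\,dx\ne0$ for each $j$ (all integrals below being finite). Then the $k\times k$ matrix $\mathrm M$ with entries $\mathrm M_{ij}=\int_{S_j}w(x)x^{2(i-1)}\,dx$, $i,j=1,\ldots,k$, is non-singular. *)

From HB Require Import structures.
From mathcomp Require Import all_boot all_order all_algebra.
From mathcomp Require Import all_classical all_reals all_analysis.
Set Implicit Arguments. Unset Strict Implicit. Unset Printing Implicit Defensive.
Import Order.TTheory GRing.Theory Num.Theory.
Import numFieldNormedType.Exports.

(* If M were singular, a nonzero row vector c with c M = 0 would give a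
   polynomial P of degree < k, with coefficients c, such that the even
   function p(x) = P(x^2) satisfies int_{S_j} w p = 0 for every j.  As w has
   a constant sign and a nonzero integral on S_j while p vanishes only on a
   finite set, p takes both signs on non-negligible parts of S_j.  Since the
   blocks S_j are a.e. ordered, one can pick u_j, v_j in S_j with
   p(u_j) > 0 > p(v_j), all the points of S_i lying below those of S_j for
   i < j.  Then P changes sign between u_j^2 and v_j^2 on k disjoint
   intervals, so it has k distinct roots: impossible. *)

From HB Require Import structures.
From mathcomp Require Import all_boot all_order all_algebra.
From mathcomp Require Import all_classical all_reals all_analysis.
From mathcomp Require Import polyrcf measurable_realfun.
Import Order.TTheory GRing.Theory Num.Theory.
Import numFieldNormedType.Exports.
Local Open Scope classical_set_scope.
Local Open Scope ring_scope.
Set Implicit Arguments. Unset Strict Implicit. Unset Printing Implicit Defensive.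

Section measure_sign.
Context d (T : measurableType d) (R : realType) (mu : {measure set T -> \bar R}).

Lemma nonnegligible_ae_witness (A B : set T) (P : T -> Prop) :
  ~ mu.-negligible A -> A `<=` B -> {ae mu, forall x, B x -> P x} ->
  exists2 x, A x & P x.
Proof.
move=> A_nn AB P_ae; apply: contrapT => noA; apply: A_nn.
by apply: negligibleS P_ae => x Ax Px; apply: noA; exists x; last exact/Px/AB.
Qed.

Variable D : set T.
Hypothesis mD : measurable D.

Lemma integrable_sum_EFin I (s : seq I) (f : I -> T -> R) :
  (forall i, mu.-integrable D (EFin \o f i)) ->
  mu.-integrable D (EFin \o (fun x => \sum_(i <- s) f i x)).
Proof.
move=> f_int; have -> : EFin \o (fun x => \sum_(i <- s) f i x) =
    (fun x => \sum_(i <- s) (f i x)%:E)%E by apply/funext => x; rewrite /= sumEFin.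
by apply: integrable_sum => // i _; exact: f_int.
Qed.

Lemma Rintegral_sum I (s : seq I) (f : I -> T -> R) :
  (forall i, mu.-integrable D (EFin \o f i)) ->
  Rintegral mu D (fun x => \sum_(i <- s) f i x) = \sum_(i <- s) Rintegral mu D (f i).
Proof.
move=> f_int; elim: s => [|i s IHs].
  by under eq_Rintegral do rewrite big_nil; rewrite big_nil Rintegral_cst // mul0r.
under eq_Rintegral do rewrite big_cons.
by rewrite big_cons RintegralD ?IHs //; exact: integrable_sum_EFin.
Qed.

Definition ae_const_sign (f : T -> R) :=
  {ae mu, forall x, D x -> 0 <= f x} \/ {ae mu, forall x, D x -> f x <= 0}.

Lemma Rintegral_eq0_ae_eq0 (f : T -> R) :
  mu.-integrable D (EFin \o f) -> ae_const_sign f -> Rintegral mu D f = 0 ->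
  {ae mu, forall x, D x -> f x = 0}.
Proof.
move=> f_int f_sign f0.
have f_meas : measurable_fun D f by apply/measurable_EFinP; exact: measurable_int f_int.
have [s abs_f] : exists s : R, {ae mu, forall x, D x -> `|f x| = s * f x}.
  case: f_sign => f_s; [exists 1|exists (-1)]; apply: filterS f_s => x fx Dx.
    by rewrite mul1r ger0_norm ?fx.
  by rewrite mulN1r ler0_norm ?fx.
have : (\int[mu]_(x in D) `|(f x)%:E| = 0)%E.
  under eq_integral do rewrite abse_EFin.
  rewrite (ae_eq_integral (fun x => (s * f x)%:E)) //.
  - under eq_integral do rewrite EFinM.
    have f_fin := integrable_fin_num mD f_int.
    by rewrite integralZl // -(fineK f_fin) -/(Rintegral mu D f) f0 mule0.
  - by apply/measurable_EFinP; exact: measurableT_comp.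
  - by apply/measurable_EFinP; exact: measurable_funM.
  - by apply: filterS abs_f => x fx Dx; rewrite fx.
move/(ae_eq_integral_abs mu mD (measurable_int mu f_int)); apply: filterS => x fx Dx.
by case: (fx Dx).
Qed.

Lemma sign_change_of_orthogonal (w q : T -> R) :
  measurable_fun D w ->
  (forall x, D x -> 0 <= w x) \/ (forall x, D x -> w x <= 0) ->
  mu.-integrable D (EFin \o (w \* q)) -> Rintegral mu D (w \* q) = 0 ->
  {ae mu, forall x, q x != 0} -> Rintegral mu D w != 0 ->
  ~ mu.-negligible (D `&` [set x | 0 < q x]) /\
  ~ mu.-negligible (D `&` [set x | q x < 0]).
Proof.
move=> w_meas w_sign wq_int wq0 q_nz w_nz.
(* Otherwise [w q] has constant sign, so it vanishes a.e., and then so does [w]. *)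
have q_unsigned : ~ ae_const_sign q.
  move=> q_sign; move/negP: w_nz; apply; apply/eqP.
  have wq_sign : ae_const_sign (w \* q).
    case: w_sign => w_s; case: q_sign => q_s; [left|right|right|left];
      apply: filterS q_s => x q_x Dx; have w_x := w_s x Dx; have {}q_x := q_x Dx.
    - exact: mulr_ge0.
    - exact: mulr_ge0_le0.
    - exact: mulr_le0_ge0.
    - exact: mulr_le0.
  have w0 : {ae mu, forall x, D x -> w x = 0}.
    apply: filterS2 q_nz (Rintegral_eq0_ae_eq0 wq_int wq_sign wq0) => x qx wqx Dx.
    by apply/eqP; move/eqP: (wqx Dx); rewrite /= mulf_eq0 (negbTE qx) orbF.
  rewrite /Rintegral (ae_eq_integral (cst 0%E)) ?integral0 //.
  - exact: measurableT_comp.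
  - by apply: filterS w0 => x wx Dx; rewrite /= wx.
split=> N_nn; apply: q_unsigned; [right|left]; apply: negligibleS N_nn => x /=;
  by move/not_implyP => [Dx /negP]; rewrite -ltNge.
Qed.

End measure_sign.

Section ae_before.
Context (R : realType) (mu : {measure set (measurableTypeR R) -> \bar R}).

(* The generic [Filter] hint for [almost_everywhere] does not fire on
   [measurableTypeR R]. *)
#[local] Instance ae_filter_mu : Filter (almost_everywhere mu) :=
  ae_filter_ringOfSetsType mu.

Definition ae_before (X Y : set R) :=
  {ae mu, forall x, X x -> {ae mu, forall y, Y y -> x < y}}.

Lemma ae_beforeS (X X' Y Y' : set R) :
  X' `<=` X -> Y' `<=` Y -> ae_before X Y -> ae_before X' Y'.
Proof.
rewrite /ae_before => XX' YY'; apply: filterS => x + /XX' => /[apply].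
by apply: filterS => y xy /YY'.
Qed.

Lemma nonnegligible_above (X Y : set R) (m : R) :
  X `<=` Y -> {ae mu, forall y, Y y -> m < y} -> ~ mu.-negligible X ->
  ~ mu.-negligible (X `&` [set y | m < y]).
Proof.
move=> XY Y_above X_nn N_nn; apply: X_nn.
apply: negligibleS (negligibleU N_nn Y_above) => y Xy.
have [my|ym] := ltP m y; first by left.
by right => /(_ (XY _ Xy)); rewrite ltNge ym.
Qed.

Lemma ae_ordered_points n (S A B : nat -> set R) :
  (forall i j, (i < j < n)%N -> ae_before (S i) (S j)) ->
  (forall j, A j `<=` S j /\ B j `<=` S j) ->
  (forall j, (j < n)%N -> ~ mu.-negligible (A j) /\ ~ mu.-negligible (B j)) ->
  exists u v : nat -> R, (forall j, (j < n)%N -> A j (u j) /\ B j (v j)) /\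
    (forall i j, (i < j < n)%N -> Num.max (u i) (v i) < Num.min (u j) (v j)).
Proof.
elim: n => [|n IHn] in S A B * => S_before AB_sub AB_nn.
  by exists (fun=> 0), (fun=> 0); split=> // i j /andP[_]; rewrite ltn0.
have first_before : {ae mu, forall x, S 0 x ->
    forall j, (0 < j < n.+1)%N -> {ae mu, forall y, S j y -> x < y}}.
  have : {ae mu, forall x, forall j,
      (0 < j < n.+1)%N -> S 0 x -> {ae mu, forall y, S j y -> x < y}}.
    apply: ae_foralln => j; have [/S_before|_] := boolP (0 < j < n.+1)%N.
      by rewrite /ae_before; apply: filterS => x + _.
    exact: aeW.
  by apply: filterS => x x_before S0x j j_n; exact: x_before.
have [A0_nn B0_nn] := AB_nn 0 isT; have [A0_sub B0_sub] := AB_sub 0.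
have [u0 A0u0 u0_before] := nonnegligible_ae_witness A0_nn A0_sub first_before.
have [v0 B0v0 v0_before] := nonnegligible_ae_witness B0_nn B0_sub first_before.
(* Recurse on the later blocks cut above [u0] and [v0]: a.e. nothing is lost. *)
pose m := Num.max u0 v0.
pose above (X : nat -> set R) j := X j.+1 `&` [set y | m < y].
have [|||u [v [uv_in uv_lt]]] := IHn (above S) (above A) (above B).
- move=> i j ij_n; have /S_before : (i.+1 < j.+1 < n.+1)%N by [].
  by apply: ae_beforeS => x [].
- by move=> j; have [sA sB] := AB_sub j.+1; split=> x [Xx mx]; split=> //;
    [exact: sA|exact: sB].
- move=> j j_n; have [Aj_nn Bj_nn] := AB_nn j.+1 j_n.
  have tail_above : {ae mu, forall y, S j.+1 y -> m < y}.
    have := u0_before j.+1 j_n; have := v0_before j.+1 j_n.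
    by apply: filterS2 => y hv hu Sy; rewrite gt_max hu ?hv.
  by have [sA sB] := AB_sub j.+1; split; apply: nonnegligible_above tail_above _.
exists (fun j => if j is j.+1 then u j else u0),
  (fun j => if j is j.+1 then v j else v0).
split=> [[|j] j_n //|[|i] [|j] //= ij_n].
- by have [[Au _] [Bv _]] := uv_in j j_n.
- by have [[_ m_u] [_ m_v]] := uv_in j ij_n; rewrite lt_min m_u m_v.
- exact: uv_lt.
Qed.

End ae_before.

Lemma sign_changes_size (R : rcfType) (P : {poly R}) n (a b : nat -> R) :
  P != 0 ->
  (forall j, (j < n)%N -> P.[a j] * P.[b j] < 0) ->
  (forall i j, (i < j < n)%N -> Num.max (a i) (b i) < Num.min (a j) (b j)) ->
  (n < size P)%N.
Proof.
move=> P_nz ab_sign ab_lt.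
have /choice[t t_root] : forall j, exists t, (j < n)%N ->
    root P t /\ Num.min (a j) (b j) < t < Num.max (a j) (b j).
  move=> j; have [j_n|_] := ltnP j n; last by exists 0.
  have [ab|ba] := leP (a j) (b j).
    have [t] := poly_ivtoo ab (ab_sign j j_n).
    by rewrite in_itv /= => t_ab Pt; exists t.
  have := ab_sign j j_n; rewrite mulrC => /(poly_ivtoo (ltW ba))[t].
  by rewrite in_itv /= => t_ba Pt; exists t.
have t_lt i j : (i < j < n)%N -> t i < t j.
  move=> /[dup] /andP[ij j_n] /ab_lt ab_ij.
  have [_ /andP[_ ti]] := t_root i (ltn_trans ij j_n).
  have [_ /andP[tj _]] := t_root j j_n.
  exact: lt_trans ti (lt_trans ab_ij tj).
have := max_poly_roots (rs := mkseq t n) P_nz; rewrite size_mkseq; apply.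
  apply/allP => x /mapP[j]; rewrite mem_iota => /andP[_ j_n] ->.
  by case: (t_root j j_n).
rewrite map_inj_in_uniq ?iota_uniq // => i j; rewrite !mem_iota /= => i_n j_n tij.
case: (ltngtP i j) => // [ij|ji].
  by have := t_lt i j; rewrite ij j_n tij ltxx => /(_ isT).
by have := t_lt j i; rewrite ji i_n tij ltxx => /(_ isT).
Qed.

Lemma sqr_max_lt_min (R : realDomainType) (a b c e : R) : 0 <= a -> 0 <= b ->
  Num.max a b < Num.min c e -> Num.max (a ^+ 2) (b ^+ 2) < Num.min (c ^+ 2) (e ^+ 2).
Proof.
move=> a_ge0 b_ge0; rewrite !gt_max !lt_min => /andP[/andP[ac ae] /andP[bc be]].
by rewrite !ltrXn2r.
Qed.

Lemma poly_zeros_negligible (R : realType) (Q : {poly R}) :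
  Q != 0 -> (@lebesgue_measure R).-negligible [set x | Q.[x] = 0].
Proof.
move=> Q_nz; have roots_countable := finite_set_countable (finite_seq (rootsR Q)).
exists [set` rootsR Q]; split.
- by apply: countable_measurable => // t; exact: measurable_set1.
- exact: countable_lebesgue_measure0.
- by move=> x /= /rootP Qx; rewrite -(roots_on_rootsR Q_nz) in_itv /= Qx.
Qed.

Lemma horner_rVpolyE (R : comNzRingType) n (c : 'rV[R]_n) x :
  (rVpoly c).[x] = \sum_(i < n) c 0 i * x ^+ i.
Proof. by rewrite horner_poly; apply: eq_bigr => i _; rewrite valK. Qed.

Definition even_moment_mx (R : realType) k (S : 'I_k -> set R) (w : R -> R) :=
  \matrix_(i < k, j < k) Rintegral lebesgue_measure (S j) (fun x => w x * x ^+ (2 * i)).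

Section even_moment_kernel.
Variables (R : realType) (k : nat) (S : 'I_k -> set R) (w : R -> R).
Local Notation mu := (@lebesgue_measure R).
Hypothesis S_meas : forall j, measurable (S j).
Hypothesis S_ge0 : forall j, S j `<=` `[0, +oo[%classic.
Hypothesis S_before : forall i j : 'I_k, (i < j)%N -> ae_before mu (S i) (S j).
Hypothesis w_meas : measurable_fun setT w.
Hypothesis w_sign :
  forall j, (forall x, S j x -> 0 <= w x) \/ (forall x, S j x -> w x <= 0).
Hypothesis w_int : forall i j : 'I_k,
  mu.-integrable (S j) (fun x => (w x * x ^+ (2 * i))%:E).
Hypothesis w_nz : forall j, Rintegral mu (S j) w != 0.
Variable c : 'rV[R]_k.
Hypotheses (c_nz : c != 0) (cM : c *m even_moment_mx S w = 0).
Local Notation P := (rVpoly c).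

Lemma kernel_poly_neq0 : P != 0.
Proof. by apply: contraNneq c_nz => P0; rewrite -[c]rVpolyK P0 linear0. Qed.

Lemma kernel_weighted_Rintegral_eq0 j :
  mu.-integrable (S j) (EFin \o (fun x => w x * P.[x ^+ 2])) /\
  Rintegral mu (S j) (fun x => w x * P.[x ^+ 2]) = 0.
Proof.
have wPE : (fun x => w x * P.[x ^+ 2]) =
    fun x => \sum_(i < k) c 0 i * (w x * x ^+ (2 * i)).
  apply/funext => x; rewrite horner_rVpolyE mulr_sumr.
  by apply: eq_bigr => i _; rewrite mulrCA exprM.
have term_int (i : 'I_k) :
    mu.-integrable (S j) (EFin \o (fun x => c 0 i * (w x * x ^+ (2 * i)))).
  have -> : EFin \o (fun x => c 0 i * (w x * x ^+ (2 * i))) =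
      (fun x => (c 0 i)%:E * (w x * x ^+ (2 * i))%:E)%E.
    by apply/funext => x; rewrite /= EFinM.
  exact: (integrableZl (mu := mu) (S_meas j) _ (w_int i j)).
rewrite wPE; split; first exact: (integrable_sum_EFin (mu := mu) (S_meas j)).
rewrite (Rintegral_sum (mu := mu) (S_meas j)) //.
have /rowP/(_ j) := cM; rewrite !mxE => cMj; rewrite -[RHS]cMj.
by apply: eq_bigr => i _; rewrite mxE RintegralZl //; [exact: S_meas|exact: w_int].
Qed.

Lemma kernel_poly_sign_change j :
  ~ mu.-negligible (S j `&` [set x | 0 < P.[x ^+ 2]]) /\
  ~ mu.-negligible (S j `&` [set x | P.[x ^+ 2] < 0]).
Proof.
have P_nz : {ae mu, forall x, P.[x ^+ 2] != 0}.
  have PX2_nz : P \Po 'X^2 != 0 by rewrite comp_poly_eq0 ?size_polyXn ?kernel_poly_neq0.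
  apply: negligibleS (poly_zeros_negligible PX2_nz) => x /negP.
  by rewrite negbK /= horner_comp hornerXn => /eqP.
have [wP_int wP0] := kernel_weighted_Rintegral_eq0 j.
apply: (sign_change_of_orthogonal (mu := mu) (S_meas j) _ (w_sign j)) => //.
exact: measurable_funS w_meas.
Qed.

Lemma kernel_poly_sign_points : exists a b : nat -> R,
  (forall j, (j < k)%N -> P.[a j] * P.[b j] < 0) /\
  (forall i j, (i < j < k)%N -> Num.max (a i) (b i) < Num.min (a j) (b j)).
Proof.
pose Sn n : set R := if insub n is Some j then S j else set0.
have SnE (j : 'I_k) : Sn j = S j by rewrite /Sn valK.
have Sn_ge0 n x : Sn n x -> 0 <= x.
  by rewrite /Sn; case: insubP => // j _ _ /S_ge0; rewrite /= in_itv andbT.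
have [|||u [v [uv_in uv_lt]]] := ae_ordered_points (mu := mu) (n := k) (S := Sn)
  (A := fun j => Sn j `&` [set x | 0 < P.[x ^+ 2]])
  (B := fun j => Sn j `&` [set x | P.[x ^+ 2] < 0]).
- move=> i j /andP[ij jk]; have ik := ltn_trans ij jk.
  by rewrite -[i]/(val (Ordinal ik)) -[j]/(val (Ordinal jk)) !SnE; exact: S_before.
- by move=> j; split=> x [].
- by move=> j jk; rewrite -[j]/(val (Ordinal jk)) SnE; exact: kernel_poly_sign_change.
exists (fun j => u j ^+ 2), (fun j => v j ^+ 2); split.
  by move=> j /uv_in[[_ u_pos] [_ v_neg]]; rewrite pmulr_rlt0.
move=> i j /[dup] /andP[ij jk] /uv_lt.
have [[Su _] [Sv _]] := uv_in i (ltn_trans ij jk).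
exact: sqr_max_lt_min (Sn_ge0 _ _ Su) (Sn_ge0 _ _ Sv).
Qed.

End even_moment_kernel.

Theorem lemmaB1 (R : realType) (k : nat) (S : 'I_k -> set R) (w : R -> R) :
  (forall j, measurable (S j)) ->
  (forall j, S j `<=` `[0, +oo[%classic) ->
  (forall j, (0 < (@lebesgue_measure R) (S j))%E) ->
  (forall i j : 'I_k, (i < j)%N ->
     {ae (@lebesgue_measure R), forall x, S i x ->
        {ae (@lebesgue_measure R), forall y, S j y -> x < y}}) ->
  measurable_fun setT w ->
  (forall j, (forall x, S j x -> 0 <= w x) \/ (forall x, S j x -> w x <= 0)) ->
  (forall (i j : 'I_k),
     (@lebesgue_measure R).-integrable (S j) (fun x => (w x * x ^+ (2 * i))%:E)) ->
  (forall j, Rintegral (@lebesgue_measure R) (S j) w != 0) ->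
  (\matrix_(i < k, j < k)
      Rintegral (@lebesgue_measure R) (S j) (fun x => w x * x ^+ (2 * i)))
    \in unitmx.
Proof.
(* [S_j] has positive measure anyway, since the integral of [w] over it is nonzero. *)
move=> S_meas S_ge0 _ S_before w_meas w_sign w_int w_nz.
rewrite -/(even_moment_mx S w) unitmxE unitfE; apply/negP => /det0P[c c_nz cM].
have [a [b [ab_sign ab_lt]]] :=
  kernel_poly_sign_points S_meas S_ge0 S_before w_meas w_sign w_int w_nz c_nz cM.
have := sign_changes_size (kernel_poly_neq0 c_nz) ab_sign ab_lt.
by rewrite ltnNge size_poly.
Qed.
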